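(* Let $l\ge 3$ and let $V_l$ be the set of Hirzebruch-Jung continued fractions $[n_1,\dots,n_l]$ of length $l$ (all $n_j\ge 2$ integers) satisfying $-1\le q_1+q_l-q\le 1$. Then: (1) no element of the form $[2,n_2,\dots,n_{l-1},2]$ lies in $V_l$; (2) if $n_1\ge 3$ and $n_l\ge 3$, then $[n_1,\dots,n_l]\notin V_l$; (3) no element of $V_l$ satisfies $\sum_{j=1}^l n_j=3l-4$.
   Context: For $[n_1,\dots,n_l]$ let $M(-n_1,\dots,-n_l)$ be the $l\times l$ tridiagonal symmetric matrix with diagonal entries $-n_1,\dots,-n_l$, entries $1$ directly above and below the diagonal, and $0$ elsewhere. Put $q=|\det M(-n_1,\dots,-n_l)|$, $q_1=|\det M(-n_2,\dots,-n_l)|$, $q_l=|\det M(-n_1,\dots,-n_{l-1})|$. *)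

From mathcomp Require Import all_boot all_order all_algebra.
Set Implicit Arguments. Unset Strict Implicit. Unset Printing Implicit Defensive.
Import Order.TTheory GRing.Theory Num.Theory.
Local Open Scope ring_scope.

Definition HJmx (s : seq int) : 'M[int]_(size s) :=
  \matrix_(i < size s, j < size s)
    (if i == j then - s`_i
     else if ((i.+1 == j :> nat) || (j.+1 == i :> nat)) then 1 else 0).

Definition HJq (s : seq int) : int := `| \det (HJmx s) |.

Definition q_full (s : seq int) : int := HJq s.
Definition q_first (s : seq int) : int := HJq (behead s).
Definition q_last (s : seq int) : int := HJq (take (size s).-1 s).

Definition in_V (l : nat) (s : seq int) : Prop :=
  size s = l /\ (forall j, (j < size s)%N -> 2 <= s`_j) /\
  -1 <= q_first s + q_last s - q_full s <= 1.

From mathcomp Require Import all_boot all_order all_algebra ring zify.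
Import Order.TTheory GRing.Theory Num.Theory.
Set Implicit Arguments. Unset Strict Implicit. Unset Printing Implicit Defensive.
Local Open Scope ring_scope.

(* Expanding along the first row, |det M(-n_1,...,-n_l)| is the continuant K(n_1,...,n_l):
   K() = 1, K(n) = n and K(a, b, w) = a K(b, w) - K(w), with the mirror recurrence at the
   right end.  For s = [a, w, c] the defect q_1 + q_l - q is thus a polynomial in a, c and
   the continuants of w with one or both ends removed, tied together by the Cassini
   identity.  It is >= 2 when a = c = 2 and <= -2 when a, c >= 3, so an element of V_l has
   exactly one end equal to 2; blowing it down, [2, w, c] |-> [w, c - 1] or
   [a, w, 2] |-> [a - 1, w], keeps the defect, lowers l by 1 and the sum by 3. *)

(* [cont_pair s] is (K(s), K(s without its last entry)), the second component being 0
   for s = [::]. *)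
Definition cont_step (ab : int * int) (n : int) : int * int := (n * ab.1 - ab.2, ab.1).
Definition cont_pair (s : seq int) : int * int := foldl cont_step (1, 0) s.
Definition cont (s : seq int) : int := (cont_pair s).1.
Definition cont_init (s : seq int) : int := (cont_pair s).2.
Arguments cont : simpl never.
Arguments cont_init : simpl never.

Lemma cont_rcons s c : cont (rcons s c) = c * cont s - cont_init s.
Proof. by rewrite /cont /cont_init /cont_pair -cats1 foldl_cat. Qed.

Lemma cont_init_rcons s c : cont_init (rcons s c) = cont s.
Proof. by rewrite /cont /cont_init /cont_pair -cats1 foldl_cat. Qed.

Lemma foldl_cont_step_lin s u1 u2 v1 v2 al be :
  foldl cont_step (al * u1 + be * v1, al * u2 + be * v2) s =
  (al * (foldl cont_step (u1, u2) s).1 + be * (foldl cont_step (v1, v2) s).1,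
   al * (foldl cont_step (u1, u2) s).2 + be * (foldl cont_step (v1, v2) s).2).
Proof.
elim: s u1 u2 v1 v2 => [|n s IH] u1 u2 v1 v2 //=.
rewrite -IH /cont_step /=; congr (foldl _ (_, _)); ring.
Qed.

Lemma cont_pair_cons2 a b y : cont_pair [:: a, b & y] =
  (a * cont (b :: y) - cont y, a * cont_init (b :: y) - cont_init y).
Proof.
rewrite /cont /cont_init /cont_pair /= /cont_step /=.
have -> : ((b * (a * 1 - 0) - 1), a * 1 - 0) =
    (a * (b * 1 - 0) + (-1) * 1, a * 1 + (-1) * 0) by congr pair; ring.
by rewrite foldl_cont_step_lin; congr pair; ring.
Qed.

Lemma cont_cons2 a b y : cont [:: a, b & y] = a * cont (b :: y) - cont y.
Proof. by rewrite {1}/cont cont_pair_cons2. Qed.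

Lemma cont_init_cons2 a b y :
  cont_init [:: a, b & y] = a * cont_init (b :: y) - cont_init y.
Proof. by rewrite {1}/cont_init cont_pair_cons2. Qed.

Lemma cont_cassini b y :
  cont_init (b :: y) * cont y - cont (b :: y) * cont_init y = 1.
Proof.
elim/last_ind: y => [|z d IH]; first by rewrite /cont /cont_init /= /cont_step /=; ring.
rewrite -rcons_cons !cont_rcons !cont_init_rcons -IH; ring.
Qed.

Definition ge2 (s : seq int) : bool := all (fun n => 2 <= n) s.

Lemma ge2_cons a s : ge2 (a :: s) = (2 <= a) && ge2 s.
Proof. by []. Qed.

Lemma ge2_rcons s c : ge2 (rcons s c) = ge2 s && (2 <= c).
Proof. by rewrite /ge2 all_rcons andbC. Qed.

Lemma cont_init_lt_cont s : ge2 s -> 0 <= cont_init s < cont s.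
Proof.
elim/last_ind: s => [|s c IH]; first by rewrite /cont /cont_init.
rewrite ge2_rcons cont_rcons cont_init_rcons => /andP[/IH]; nia.
Qed.

Lemma cont_init_gt0 s : ge2 s -> s != [::] -> 0 < cont_init s.
Proof.
case/lastP: s => [|s c] //; rewrite ge2_rcons cont_init_rcons => /andP[gs _] _.
by have := cont_init_lt_cont gs; lia.
Qed.

Lemma cont_behead_lt b y : ge2 (b :: y) -> cont y < cont (b :: y).
Proof.
elim: y b => [|c z IH] b; rewrite ge2_cons => /andP[b2 gy].
  by rewrite /cont /= /cont_step /=; lia.
have := IH _ gy; have := cont_init_lt_cont gy; rewrite cont_cons2; nia.
Qed.

Lemma det_HJmx_cons2 a b y :
  \det (HJmx [:: a, b & y]) = - a * \det (HJmx (b :: y)) - \det (HJmx y).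
Proof.
rewrite (expand_det_row _ ord0) !big_ord_recl big1 ?addr0; last first.
  by move=> i _; rewrite !mxE mul0r.
rewrite /cofactor.
have -> : row' ord0 (col' ord0 (HJmx [:: a, b & y])) = HJmx (b :: y).
  by apply/matrixP => i j; rewrite !mxE.
rewrite !mxE /= expr0 mul1r expr1 mulN1r mul1r; congr (_ + _).
set M := row' _ _.
rewrite (expand_det_col M ord0) big_ord_recl big1 ?addr0; last first.
  by move=> i _; rewrite !mxE mul0r.
have -> : M ord0 ord0 = 1 by rewrite !mxE.
rewrite mul1r /cofactor expr0 mul1r; congr (- \det _).
by apply/matrixP => i j; rewrite !mxE.
Qed.

Lemma det_HJmx s : \det (HJmx s) = (-1) ^+ size s * cont s.
Proof.
suff /(_ s)[] : forall y, \det (HJmx y) = (-1) ^+ size y * cont y /\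
    forall b, \det (HJmx (b :: y)) = (-1) ^+ (size y).+1 * cont (b :: y) by [].
elim=> [|c y [IHy IHcy]]; split=> [|b] //.
- by rewrite det_mx00.
- by rewrite det_mx11 mxE /cont /= /cont_step /=; ring.
- by rewrite det_HJmx_cons2 IHcy IHy cont_cons2 /= !exprS; ring.
Qed.

Lemma HJq_cont s : ge2 s -> HJq s = cont s.
Proof.
move=> gs; rewrite /HJq det_HJmx normrM normrX normrN1 expr1n mul1r.
by apply/gtr0_norm; have := cont_init_lt_cont gs; lia.
Qed.

Lemma q_last_cont_init s : ge2 s -> s != [::] -> q_last s = cont_init s.
Proof.
case/lastP: s => [|s c] // + _; rewrite ge2_rcons => /andP[gs _].
by rewrite /q_last size_rcons -cats1 take_size_cat // cats1 cont_init_rcons HJq_cont.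
Qed.

Definition cdefect (s : seq int) : int := cont (behead s) + cont_init s - cont s.

Lemma in_VE l s : s != [::] ->
  in_V l s <-> [/\ size s = l, ge2 s & -1 <= cdefect s <= 1].
Proof.
move=> s0; have defectE : ge2 s -> q_first s + q_last s - q_full s = cdefect s.
  move=> gs; rewrite /q_first /q_full q_last_cont_init // !HJq_cont //.
  by case: s gs {s0} => // ? ?; rewrite ge2_cons => /andP[].
split=> [[sz [s2 hd]] | [sz gs hd]].
  have gs : ge2 s by apply/(all_nthP 0).
  by split; rewrite // -defectE.
by split=> //; split; [apply/(all_nthP 0) | rewrite defectE].
Qed.

Lemma cdefect_ends a b y c : cdefect (a :: b :: rcons y c) =
  (c * cont (b :: y) - cont_init (b :: y)) + (a * cont (b :: y) - cont y)
  - (a * (c * cont (b :: y) - cont_init (b :: y)) - (c * cont y - cont_init y)).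
Proof.
rewrite /cdefect [behead _]/= cont_cons2 cont_init_cons2 -rcons_cons.
by rewrite !cont_rcons !cont_init_rcons.
Qed.

Lemma cdefect_blowdown_first b y c :
  cdefect (2 :: b :: rcons y c) = cdefect (b :: rcons y (c - 1)).
Proof.
rewrite cdefect_ends /cdefect [behead _]/= -rcons_cons.
rewrite !cont_rcons !cont_init_rcons; ring.
Qed.

Lemma cdefect_blowdown_last a b y :
  cdefect (a :: b :: rcons y 2) = cdefect ((a - 1) :: b :: y).
Proof. by rewrite cdefect_ends /cdefect [behead _]/= cont_cons2 cont_init_cons2; ring. Qed.

Lemma cdefect_ends_eq2 b y : ge2 (b :: y) -> 2 <= cdefect (2 :: b :: rcons y 2).
Proof.
move=> gby; have /andP[_ gy] := gby; rewrite cdefect_ends.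
have := cont_init_gt0 gby isT; have := cont_init_lt_cont gy; lia.
Qed.

(* With p := K(b y), the factors X := c p - p - K_init(b y) and Y := a p - p - K(y)
   are both at least p + 1, while the Cassini identity gives X Y = p^2 + 1 - p D
   for the defect D; hence D <= -2. *)
Lemma cdefect_ends_ge3 a b y c : 3 <= a -> 3 <= c -> ge2 (b :: y) ->
  cdefect (a :: b :: rcons y c) <= -2.
Proof.
move=> a3 c3 gby; rewrite cdefect_ends.
have cassini := cont_cassini b y.
have [pi_ge0 pi_lt] := andP (cont_init_lt_cont gby).
have pt_lt := cont_behead_lt gby.
set p := cont (b :: y) in cassini pi_ge0 pi_lt pt_lt *.
set pi := cont_init (b :: y) in cassini pi_ge0 pi_lt *.
set pt := cont y in cassini pt_lt *.
set pti := cont_init y in cassini *.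
set D := (X in X <= _).
have X_ge : p + 1 <= c * p - p - pi by nia.
have Y_ge : p + 1 <= a * p - p - pt by nia.
have XY : (c * p - p - pi) * (a * p - p - pt) = p * p + 1 - p * D.
  by rewrite /D -cassini; ring.
have : (p + 1) * (p + 1) <= p * p + 1 - p * D by rewrite -XY; apply: ler_pM; lia.
nia.
Qed.

Lemma seq_ends (s : seq int) : (3 <= size s)%N ->
  exists a b y c, s = a :: b :: rcons y c.
Proof.
case: s => [|a [|b t]] //; case/lastP: t => [|y c] // _.
by exists a, b, y, c.
Qed.

Lemma ge2_ends a b y c :
  ge2 (a :: b :: rcons y c) = [&& 2 <= a, ge2 (b :: y) & 2 <= c].
Proof. by rewrite ge2_cons -rcons_cons ge2_rcons andbA. Qed.

Lemma in_V_ends l (a b c : int) y : in_V l (a :: b :: rcons y c) ->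
  (a = 2 /\ 3 <= c) \/ (c = 2 /\ 3 <= a).
Proof.
case/in_VE=> // _; rewrite ge2_ends => /and3P[a2 gby c2].
case/andP=> d_ge d_le.
have [a_eq|a3] : a = 2 \/ 3 <= a by lia.
all: have [c_eq|c3] : c = 2 \/ 3 <= c by lia.
- by move: d_le; rewrite a_eq c_eq => /(le_trans (cdefect_ends_eq2 gby)).
- by left.
- by right.
- by have := le_trans d_ge (cdefect_ends_ge3 a3 c3 gby).
Qed.

Lemma in_V_first_last l s : (3 <= l)%N -> in_V l s ->
  (s`_0 = 2 /\ 3 <= s`_l.-1) \/ (s`_l.-1 = 2 /\ 3 <= s`_0).
Proof.
move=> l3 hV; have [sz _] := hV; rewrite -sz in l3 *.
have [a [b [y [c es]]]] := seq_ends l3; subst s.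
by rewrite /= size_rcons /= nth_rcons ltnn eqxx; exact: in_V_ends hV.
Qed.

Lemma in_V_blowdown_first l (b c : int) y : 3 <= c ->
  in_V l.+1 (2 :: b :: rcons y c) -> in_V l (b :: rcons y (c - 1)).
Proof.
move=> c3 /in_VE[//|sz gs hd]; apply/in_VE => //; split.
- by move: sz; rewrite /= !size_rcons => -[].
- by move: gs; rewrite ge2_ends -rcons_cons ge2_rcons => /and3P[_ -> _] /=; lia.
- by rewrite -cdefect_blowdown_first.
Qed.

Lemma in_V_blowdown_last l (a b : int) y : 3 <= a ->
  in_V l.+1 (a :: b :: rcons y 2) -> in_V l ((a - 1) :: b :: y).
Proof.
move=> a3 /in_VE[//|sz gs hd]; apply/in_VE => //; split.
- by move: sz; rewrite /= !size_rcons => -[].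
- by move: gs; rewrite ge2_ends !ge2_cons => /and3P[_ /andP[-> ->] _]; rewrite !andbT; lia.
- by rewrite -cdefect_blowdown_last.
Qed.

Lemma sum_ge2 s : ge2 s -> 2 * (size s)%:Z <= \sum_(x <- s) x.
Proof.
elim: s => [|n s IH]; first by rewrite big_nil.
by rewrite ge2_cons big_cons => /andP[n2 /IH]; rewrite /=; lia.
Qed.

(* The blow-downs carry a counterexample down to l = 3, where the sum is >= 6 > 5. *)
Lemma in_V_sum l s : (3 <= l)%N -> in_V l s -> \sum_(x <- s) x <> 3 * l%:Z - 4.
Proof.
elim: l s => [|l IH] s // l3 hV; have [sz _] := hV.
have [a [b [y [c es]]]] : exists a b y c, s = a :: b :: rcons y c.
  by apply: seq_ends; rewrite sz.
subst s; have [l_eq|l3'] : l = 2%N \/ (3 <= l)%N by lia.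
  have /in_VE[//|_ gs _] := hV; have := sum_ge2 gs.
  by rewrite sz l_eq; lia.
have [[a_eq c3]|[c_eq a3]] := in_V_ends hV.
- move: hV; rewrite a_eq => /(in_V_blowdown_first c3)/(IH _ l3').
  by rewrite !big_cons !big_rcons /=; move: (\sum_(j <- y) j) => S; lia.
- move: hV; rewrite c_eq => /(in_V_blowdown_last a3)/(IH _ l3').
  by rewrite !big_cons !big_rcons /=; move: (\sum_(j <- y) j) => S; lia.
Qed.

Theorem lemma2p7 (l : nat) : (3 <= l)%N ->
  (forall s : seq int, in_V l s -> ~ (s`_0 = 2 /\ s`_(l.-1) = 2)) /\
  (forall s : seq int, 3 <= s`_0 -> 3 <= s`_(l.-1) -> ~ in_V l s) /\
  (forall s : seq int, in_V l s -> \sum_(x <- s) x <> 3 * (l%:Z) - 4).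
Proof.
move=> l3; split; [|split]; last by move=> s; exact: in_V_sum.
- by move=> s /(in_V_first_last l3); lia.
- by move=> s first_ge last_ge /(in_V_first_last l3); lia.
Qed.
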